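(* Fix $n$, $\mu_n>0$ and $t\in\mathbb R$, and for $\delta\in\mathbb R$ let $\theta_n(\delta)=-(t+\delta)/n^{1/2}$. Then $$\lim_{\delta\downarrow0}\big|F_{A,n,\theta_n(-\delta)}(t)-F_{A,n,\theta_n(\delta)}(t)\big|=\Phi(t+n^{1/2}\mu_n)-\Phi(t-n^{1/2}\mu_n).$$
   Context: Gaussian location model: for each sample size $n$, $y_1,\dots,y_n$ are i.i.d. $N(\theta,1)$ with $\theta\in\mathbb R$ unknown; $\bar y$ is their mean. $P_{n,\theta}$ denotes the probability governing a sample of size $n$ when $\theta$ is the true parameter. Given a nonrandom tuning parameter $\mu_n>0$, the adaptive LASSO estimator is $\hat\theta_A=0$ if $|\bar y|\le\mu_n$ and $\hat\theta_A=\bar y-\mu_n^2/\bar y$ if $|\bar y|>\mu_n$. $F_{A,n,\theta}$ denotes the cdf of $n^{1/2}(\hat\theta_A-\theta)$ under $P_{n,\theta}$. $\Phi$ is the standard normal cdf. *)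

From Stdlib Require Import Reals Lra ClassicalEpsilon.
Open Scope R_scope.

Definition phi (z : R) : R := exp (- z ^ 2 / 2) / sqrt (2 * PI).

Definition improper_integral (f : R -> R) (L : R) : Prop :=
  forall eps, 0 < eps -> exists M0, forall M, M0 <= M ->
    exists pr : Riemann_integrable f (- M) M, Rabs (RiemannInt pr - L) < eps.

Definition indicator (A : R -> Prop) (z : R) : R :=
  if excluded_middle_informative (A z) then 1 else 0.

Definition std_normal_prob (A : R -> Prop) : R :=
  epsilon (inhabits 0)
    (fun L => improper_integral (fun z => phi z * indicator A z) L).

Definition Phi (x : R) : R := std_normal_prob (fun z => z <= x).

(* adaptive LASSO estimator as a function of the sample mean ybar *)
Definition alasso (mu ybar : R) : R :=
  if Rle_dec (Rabs ybar) mu then 0 else ybar - mu ^ 2 / ybar.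

(* F_{A,n,theta}(t) = P_{n,theta}( sqrt n (thetahat_A - theta) <= t ),
   using ybar = theta + Z / sqrt n with Z ~ N(0,1) under P_{n,theta}. *)
Definition F_A (n : nat) (mu theta t : R) : R :=
  std_normal_prob
    (fun z => sqrt (INR n) * (alasso mu (theta + z / sqrt (INR n)) - theta) <= t).

Definition theta_n (n : nat) (t delta : R) : R := - (t + delta) / sqrt (INR n).

(* Write s = sqrt n, m = s * mu and Z = s * (ybar - theta) ~ N(0,1).  After
   rescaling, s * thetahat_A equals  shrink m (s * ybar), where
   shrink m w = 0 for |w| <= m and w - m^2/w otherwise.  Comparing shrink
   with a level c /= 0 amounts to locating w relative to the roots of
   X^2 - c X - m^2, so for theta = theta_n(d) each event
   {s (thetahat_A - theta) <= t} is a half-line {Z <= t + threshold}.  The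
   threshold is -h(d) for d > 0 and +h(|d|) for d < 0, where h(d) = (sqrt (d^2 + 4 m^2) - d) / 2 lies in
   [m - d/2, m].  Hence the difference of the two cdfs in the theorem is
   exactly Phi (t + h(delta)) - Phi (t - h(delta)).

   On the Gaussian side we show that the improper integrals defining Phi
   exist (the truncated integrals are monotone in the truncation and bounded
   by a Cauchy majorant, integrated with atan) and that Phi is Lipschitz with
   constant phi(0) = 1/sqrt(2 pi).  The theorem then follows from
   |h(delta) - m| <= delta/2. *)

From Stdlib Require Import Reals Lra Psatz ClassicalEpsilon Classical
  FunctionalExtensionality PropExtensionality.
Open Scope R_scope.

(* The adaptive LASSO on the scale of the sufficient statistic s * ybar,
   with threshold m = s * mu. *)
Definition shrink (m w : R) : R := if Rle_dec (Rabs w) m then 0 else w - m ^ 2 / w.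

Lemma alasso_scaled (s mu w : R) : 0 < s -> 0 < mu -> s * alasso mu (w / s) = shrink (s * mu) w.
Proof.
  intros Hs Hmu. unfold alasso, shrink.
  assert (Habs : Rabs (w / s) = Rabs w / s).
  { unfold Rdiv. rewrite Rabs_mult, Rabs_inv, (Rabs_right s) by lra. reflexivity. }
  rewrite Habs.
  destruct (Rle_dec (Rabs w / s) mu) as [H1|H1], (Rle_dec (Rabs w) (s * mu)) as [H2|H2].
  - ring.
  - exfalso. apply H2. apply (Rmult_le_compat_l s) in H1; [|lra].
    replace (s * (Rabs w / s)) with (Rabs w) in H1 by (field; lra). lra.
  - exfalso. apply H1. apply (Rmult_le_reg_l s); [lra|].
    replace (s * (Rabs w / s)) with (Rabs w) by (field; lra). lra.
  - assert (Hw : w <> 0).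
    { intro E. rewrite E, Rabs_R0 in H2. apply H2. apply Rmult_le_pos; lra. }
    field. lra.
Qed.

Section ShrinkThresholds.
Variables m c : R.
Hypothesis Hm : 0 < m.
Let r := sqrt (c ^ 2 + 4 * m ^ 2).
Let a := (c + r) / 2.
Let b := (c - r) / 2.

Lemma root_sq : r * r = c ^ 2 + 4 * m ^ 2.
Proof. unfold r. apply sqrt_sqrt. nra. Qed.

(* a and b are the roots of X^2 - c X - m^2, which gives the factorisation
   of shrink m w - c outside [-m, m] *)
Lemma shrink_outer_factor (w : R) : w <> 0 ->
  w - m ^ 2 / w - c = (w - a) * (w - b) / w.
Proof.
  intros Hw. pose proof root_sq.
  assert (Hq : (w - a) * (w - b) = w * w - c * w - m ^ 2) by (unfold a, b; nra).
  rewrite Hq. field. exact Hw.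
Qed.

Lemma shrink_right_le (w : R) : m < w -> (shrink m w <= c <-> (w - a) * (w - b) <= 0).
Proof.
  intros Hw. unfold shrink.
  destruct (Rle_dec (Rabs w) m) as [Hle|_]; [rewrite Rabs_right in Hle; lra|].
  pose proof (shrink_outer_factor w ltac:(lra)) as E.
  set (q := (w - a) * (w - b)) in *.
  assert (Hq : q = (w - m ^ 2 / w - c) * w) by (rewrite E; field; lra).
  split; intro H; nra.
Qed.

Lemma shrink_left_le (w : R) : w < - m -> (shrink m w <= c <-> 0 <= (w - a) * (w - b)).
Proof.
  intros Hw. unfold shrink.
  destruct (Rle_dec (Rabs w) m) as [Hle|_]; [rewrite Rabs_left in Hle; lra|].
  pose proof (shrink_outer_factor w ltac:(lra)) as E.
  set (q := (w - a) * (w - b)) in *.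
  assert (Hq : q = (w - m ^ 2 / w - c) * w) by (rewrite E; field; lra).
  split; intro H; nra.
Qed.

Lemma shrink_inner (w : R) : - m <= w <= m -> shrink m w = 0.
Proof.
  intros Hw. unfold shrink.
  destruct (Rle_dec (Rabs w) m) as [_|H]; [reflexivity|].
  exfalso. apply H. apply Rabs_le. exact Hw.
Qed.

Lemma shrink_le_pos (w : R) : 0 < c -> (shrink m w <= c <-> w <= a).
Proof.
  intros Hc. pose proof root_sq as Hr. pose proof (sqrt_pos (c ^ 2 + 4 * m ^ 2)) as Hr0. fold r in Hr0.
  assert (Ha : m < a) by (unfold a; nra).
  assert (Hb : - m < b < 0) by (unfold b; split; nra).
  destruct (Rlt_le_dec m w) as [Hright|Hw1]; [|destruct (Rlt_le_dec w (- m)) as [Hleft|Hw2]].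
  - assert (Hwb : 0 < w - b) by lra.
    rewrite (shrink_right_le w Hright). split; intro H; nra.
  - assert (Hwa : w - a < 0) by lra. assert (Hwb : w - b < 0) by lra.
    rewrite (shrink_left_le w Hleft). split; intro H; nra.
  - rewrite (shrink_inner w ltac:(lra)). lra.
Qed.

Lemma shrink_le_neg (w : R) : c < 0 -> (shrink m w <= c <-> w <= b).
Proof.
  intros Hc. pose proof root_sq as Hr. pose proof (sqrt_pos (c ^ 2 + 4 * m ^ 2)) as Hr0. fold r in Hr0.
  assert (Ha : 0 < a < m) by (unfold a; split; nra).
  assert (Hb : b < - m) by (unfold b; nra).
  destruct (Rlt_le_dec m w) as [Hright|Hw1]; [|destruct (Rlt_le_dec w (- m)) as [Hleft|Hw2]].
  - assert (Hwa : 0 < w - a) by lra. assert (Hwb : 0 < w - b) by lra.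
    rewrite (shrink_right_le w Hright). split; intro H; nra.
  - assert (Hwa : w - a < 0) by lra.
    rewrite (shrink_left_le w Hleft). split; intro H; nra.
  - rewrite (shrink_inner w ltac:(lra)). lra.
Qed.
End ShrinkThresholds.

Lemma alasso_event (s mu t d z : R) : 0 < s -> 0 < mu ->
  (s * (alasso mu (- (t + d) / s + z / s) - - (t + d) / s) <= t <->
   shrink (s * mu) (z - t - d) <= - d).
Proof.
  intros Hs Hmu.
  replace (- (t + d) / s + z / s) with ((z - t - d) / s) by (field; lra).
  rewrite <- (alasso_scaled s mu (z - t - d) Hs Hmu).
  replace (s * (alasso mu ((z - t - d) / s) - - (t + d) / s))
    with (s * alasso mu ((z - t - d) / s) + (t + d)) by (field; lra).
  split; intro H; lra.
Qed.

Lemma std_normal_prob_ext (A B : R -> Prop) :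
  (forall z, A z <-> B z) -> std_normal_prob A = std_normal_prob B.
Proof.
  intros HAB. f_equal. apply functional_extensionality. intro z.
  apply propositional_extensionality. apply HAB.
Qed.

(* For d > 0, half_gap m d is the positive root of X^2 + d X - m^2; the events
   defining F_A at theta_n(d) and theta_n(-d) are {Z <= t -/+ half_gap m d}. *)
Definition half_gap (m d : R) : R := (sqrt (d ^ 2 + 4 * m ^ 2) - d) / 2.

Lemma half_gap_bounds (m d : R) : 0 <= m -> 0 <= d ->
  0 <= half_gap m d /\ m - d / 2 <= half_gap m d <= m.
Proof.
  intros Hm Hd. unfold half_gap.
  set (r := sqrt (d ^ 2 + 4 * m ^ 2)).
  assert (Hr0 : 0 <= r) by apply sqrt_pos.
  assert (Hr : r * r = d ^ 2 + 4 * m ^ 2) by (unfold r; apply sqrt_sqrt; nra).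
  repeat split; nra.
Qed.

(* Closed forms of the two cdfs in the theorem, from the threshold analysis:
   at theta_n(delta) the level is c = -delta < 0, at theta_n(-delta) it is
   c = delta > 0. *)
Lemma F_A_theta_n_pos (n : nat) (mu t delta : R) : (0 < n)%nat -> 0 < mu -> 0 < delta ->
  F_A n mu (theta_n n t delta) t = Phi (t - half_gap (sqrt (INR n) * mu) delta).
Proof.
  intros Hn Hmu Hd. set (s := sqrt (INR n)).
  assert (Hs : 0 < s) by (apply sqrt_lt_R0, lt_0_INR; exact Hn).
  unfold F_A, theta_n, Phi, half_gap. fold s. apply std_normal_prob_ext. intro z.
  rewrite alasso_event, shrink_le_neg by nra.
  replace ((- delta) ^ 2) with (delta ^ 2) by ring.
  split; intro H; lra.
Qed.

Lemma F_A_theta_n_neg (n : nat) (mu t delta : R) : (0 < n)%nat -> 0 < mu -> 0 < delta ->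
  F_A n mu (theta_n n t (- delta)) t = Phi (t + half_gap (sqrt (INR n) * mu) delta).
Proof.
  intros Hn Hmu Hd. set (s := sqrt (INR n)).
  assert (Hs : 0 < s) by (apply sqrt_lt_R0, lt_0_INR; exact Hn).
  unfold F_A, theta_n, Phi, half_gap. fold s. apply std_normal_prob_ext. intro z.
  rewrite alasso_event, shrink_le_pos by nra.
  replace ((- - delta) ^ 2) with (delta ^ 2) by ring.
  split; intro H; lra.
Qed.

Definition phi_max : R := / sqrt (2 * PI).

Lemma phi_max_pos : 0 < phi_max.
Proof.
  unfold phi_max. apply Rinv_0_lt_compat, sqrt_lt_R0. pose proof PI_RGT_0. lra.
Qed.

Lemma phi_eq (z : R) : phi z = phi_max * exp (- z ^ 2 / 2).
Proof. unfold phi, phi_max, Rdiv. ring. Qed.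

Lemma phi_pos (z : R) : 0 < phi z.
Proof. rewrite phi_eq. apply Rmult_lt_0_compat; [apply phi_max_pos | apply exp_pos]. Qed.

Lemma phi_le_max (z : R) : phi z <= phi_max.
Proof.
  rewrite phi_eq. pose proof phi_max_pos.
  assert (Hexp : exp (- z ^ 2 / 2) <= 1).
  { replace (- z ^ 2 / 2) with (- (z ^ 2 / 2)) by field. rewrite exp_Ropp.
    pose proof (exp_ineq1_le (z ^ 2 / 2)). pose proof (pow2_ge_0 z).
    rewrite <- Rinv_1. apply Rinv_le_contravar; lra. }
  pose proof (exp_pos (- z ^ 2 / 2)). nra.
Qed.

(* The Cauchy-type majorant that makes the tails integrable: e^u >= 1 + u. *)
Definition cauchy_majorant (z : R) : R := 2 * phi_max * / (1 + z ^ 2).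

Lemma phi_le_cauchy (z : R) : phi z <= cauchy_majorant z.
Proof.
  rewrite phi_eq. unfold cauchy_majorant. pose proof phi_max_pos. pose proof (pow2_ge_0 z).
  assert (Hexp : exp (- z ^ 2 / 2) <= 2 * / (1 + z ^ 2)).
  { replace (- z ^ 2 / 2) with (- (z ^ 2 / 2)) by field. rewrite exp_Ropp.
    pose proof (exp_ineq1_le (z ^ 2 / 2)).
    apply Rle_trans with (/ (1 + z ^ 2 / 2)); [apply Rinv_le_contravar; lra|].
    replace (/ (1 + z ^ 2 / 2)) with (2 * / (2 + z ^ 2)) by (field; lra).
    apply Rmult_le_compat_l; [lra|]. apply Rinv_le_contravar; lra. }
  nra.
Qed.

Lemma phi_continuous (z : R) : continuity_pt phi z.
Proof. unfold phi. reg. Qed.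

Lemma cauchy_majorant_continuous (z : R) : continuity_pt cauchy_majorant z.
Proof. unfold cauchy_majorant. reg. pose proof (pow2_ge_0 z). lra. Qed.

Lemma RiemannInt_antiderivative (f g : R -> R) (a b : R) (pr : Riemann_integrable f a b) :
  a <= b -> (forall x, a <= x <= b -> continuity_pt f x) ->
  (forall x, a <= x <= b -> derivable_pt_lim g x (f x)) ->
  RiemannInt pr = g b - g a.
Proof.
  intros Hab Hcont Hder.
  rewrite (RiemannInt_P20 Hab (FTC_P1 Hab Hcont) pr).
  assert (Hprim : antiderivative f g a b).
  { split; [|exact Hab]. intros x Hx. exists (exist _ (f x) (Hder x Hx)). reflexivity. }
  destruct (antiderivative_Ucte _ _ _ _ _ (RiemannInt_P29 Hab Hcont) Hprim) as [k Hk].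
  rewrite !Hk; [ring | split; lra | split; lra].
Qed.

(* The majorant has total mass 2 phi_max * pi (its primitive is a multiple of atan). *)
Lemma cauchy_majorant_integral_bound (a b : R) (pr : Riemann_integrable cauchy_majorant a b) :
  a <= b -> RiemannInt pr <= 2 * phi_max * PI.
Proof.
  intros Hab.
  rewrite (RiemannInt_antiderivative _ (mult_real_fct (2 * phi_max) atan) a b pr Hab).
  - unfold mult_real_fct. pose proof (atan_bound a). pose proof (atan_bound b).
    pose proof phi_max_pos. nra.
  - intros; apply cauchy_majorant_continuous.
  - intros x _. apply derivable_pt_lim_scal, derivable_pt_lim_atan.
Qed.

(* A function vanishing on the open interval (a, b) is Riemann integrable on
   [a, b] (it is a step function); the endpoint values are irrelevant. *)
Lemma Riemann_integrable_zero_inside (f : R -> R) (a b : R) :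
  a <= b -> (forall z, a < z < b -> f z = 0) -> Riemann_integrable f a b.
Proof.
  intros Hab Hzero.
  assert (Hstep : IsStepFun f a b).
  { exists (cons a (cons b nil)), (cons 0 nil). unfold adapted_couple; repeat split.
    - intros i Hi. simpl in Hi. destruct i; [exact Hab | lia].
    - simpl. unfold Rmin. destruct (Rle_dec a b); [reflexivity | contradiction].
    - simpl. unfold Rmax. destruct (Rle_dec a b); [reflexivity | contradiction].
    - intros i Hi x Hx. simpl in Hi. destruct i; [apply Hzero, Hx | lia]. }
  intros eps. exists (mkStepFun Hstep), (mkStepFun (StepFun_P4 a b 0)). split.
  - intros z _. simpl. unfold fct_cte. rewrite Rminus_diag, Rabs_R0. lra.
  - rewrite StepFun_P18, Rmult_0_l, Rabs_R0. apply cond_pos.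
Qed.

Definition cdf_integrand (x z : R) : R := phi z * indicator (fun z => z <= x) z.

Lemma cdf_integrand_le (x z : R) : z <= x -> cdf_integrand x z = phi z.
Proof.
  intros Hz. unfold cdf_integrand, indicator.
  destruct (excluded_middle_informative (z <= x)); [ring | contradiction].
Qed.

Lemma cdf_integrand_gt (x z : R) : x < z -> cdf_integrand x z = 0.
Proof.
  intros Hz. unfold cdf_integrand, indicator.
  destruct (excluded_middle_informative (z <= x)); [lra | ring].
Qed.

Lemma cdf_integrand_bounds (x z : R) : 0 <= cdf_integrand x z <= phi z.
Proof.
  pose proof (phi_pos z).
  destruct (Rle_lt_dec z x).
  - rewrite cdf_integrand_le by lra. lra.
  - rewrite cdf_integrand_gt by lra. lra.
Qed.

(* The integrand is continuous left of x and vanishes right of x. *)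
Lemma cdf_integrable (x a b : R) : Riemann_integrable (cdf_integrand x) a b.
Proof.
  assert (Hleft : forall a b, a <= b -> b <= x -> Riemann_integrable (cdf_integrand x) a b).
  { intros a' b' Hab Hbx. apply Riemann_integrable_ext with phi.
    - intros z Hz. rewrite Rmin_left, Rmax_right in Hz by lra.
      rewrite cdf_integrand_le by lra. reflexivity.
    - apply continuity_implies_RiemannInt; [lra|]. intros; apply phi_continuous. }
  assert (Hright : forall a b, x <= a <= b -> Riemann_integrable (cdf_integrand x) a b).
  { intros a' b' Hab. apply Riemann_integrable_zero_inside; [lra|].
    intros z Hz. apply cdf_integrand_gt. lra. }
  assert (Hordered : forall a b, a <= b -> Riemann_integrable (cdf_integrand x) a b).
  { intros a' b' Hab.
    destruct (Rle_lt_dec b' x); [apply Hleft; lra|].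
    destruct (Rle_lt_dec x a'); [apply Hright; lra|].
    apply RiemannInt_P24 with x; [apply Hleft | apply Hright]; lra. }
  destruct (Rle_lt_dec a b).
  - apply Hordered. lra.
  - apply RiemannInt_P1, Hordered. lra.
Qed.

(* Truncated integrals of a nonnegative function integrable on every compact
   interval, whose symmetric truncations are bounded, converge: they are
   monotone in the truncation level, so their supremum is the limit. *)
Section ImproperIntegralOfBounded.
Variable f : R -> R.
Variable f_integrable : forall a b, Riemann_integrable f a b.
Hypothesis f_nonneg : forall z, 0 <= f z.
Variable B : R.
Hypothesis truncation_bounded : forall M, 0 <= M -> RiemannInt (f_integrable (- M) M) <= B.

Let integral (a b : R) : R := RiemannInt (f_integrable a b).

Lemma integral_nonneg (a b : R) : a <= b -> 0 <= integral a b.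
Proof.
  intros Hab. unfold integral.
  pose proof (RiemannInt_P19 (RiemannInt_P14 a b 0) (f_integrable a b) Hab
                (fun z _ => f_nonneg z)) as H.
  rewrite RiemannInt_P15 in H. lra.
Qed.

Lemma truncation_monotone (M M' : R) : 0 <= M -> M <= M' -> integral (- M) M <= integral (- M') M'.
Proof.
  intros HM HMM'. unfold integral.
  rewrite <- (RiemannInt_P26 (f_integrable (- M') (- M)) (f_integrable (- M) M')),
          <- (RiemannInt_P26 (f_integrable (- M) M) (f_integrable M M')).
  pose proof (integral_nonneg (- M') (- M)). pose proof (integral_nonneg M M').
  unfold integral in *. lra.
Qed.

Lemma improper_integral_exists : exists L, improper_integral f L.
Proof.
  set (E := fun v => exists M, 0 <= M /\ v = integral (- M) M).
  assert (HEbound : bound E) by (exists B; intros v [M [HM ->]]; apply truncation_bounded, HM).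
  assert (HEinhabited : exists v, E v) by (exists (integral 0 0), 0; split; [lra | f_equal; ring]).
  destruct (completeness E HEbound HEinhabited) as [L [Hub Hlub]].
  exists L. intros eps Heps.
  destruct (classic (exists M, 0 <= M /\ L - eps < integral (- M) M)) as [[M0 [HM0 Hclose]] | Hfar].
  - exists M0. intros M HM. exists (f_integrable (- M) M).
    assert (integral (- M) M <= L) by (apply Hub; exists M; split; [lra | reflexivity]).
    pose proof (truncation_monotone M0 M HM0 HM).
    unfold integral in *. apply Rabs_def1; lra.
  - exfalso. assert (L <= L - eps); [|lra].
    apply Hlub. intros v [M [HM ->]].
    apply Rnot_lt_le. intro Hlt. apply Hfar. exists M. split; assumption.
Qed.
End ImproperIntegralOfBounded.

(* Phi x is the improper integral of its integrand, which is dominated by the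
   Cauchy majorant. *)
Lemma Phi_spec (x : R) : improper_integral (cdf_integrand x) (Phi x).
Proof.
  unfold Phi, std_normal_prob. apply epsilon_spec.
  apply (improper_integral_exists _ (cdf_integrable x) (fun z => proj1 (cdf_integrand_bounds x z))
           (2 * phi_max * PI)).
  intros M HM.
  assert (pr : Riemann_integrable cauchy_majorant (- M) M).
  { apply continuity_implies_RiemannInt; [lra|]. intros; apply cauchy_majorant_continuous. }
  apply Rle_trans with (RiemannInt pr); [|apply cauchy_majorant_integral_bound; lra].
  apply RiemannInt_P19; [lra|]. intros z _.
  apply Rle_trans with (phi z); [apply cdf_integrand_bounds | apply phi_le_cauchy].
Qed.

(* On a window [-M, M] containing x <= y, the truncated integrals for y and x
   differ by the integral of phi over [x, y], which lies in [0, phi_max (y - x)]. *)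
Lemma truncated_increment (x y M : R) : - M <= x -> x <= y -> y <= M ->
  0 <= RiemannInt (cdf_integrable y (- M) M) - RiemannInt (cdf_integrable x (- M) M)
    <= phi_max * (y - x).
Proof.
  intros HMx Hxy HyM.
  set (J := fun c a b => RiemannInt (cdf_integrable c a b)).
  assert (Hsplit : forall c, J c (- M) M = J c (- M) x + J c x y + J c y M).
  { intro c. unfold J.
    rewrite (RiemannInt_P26 (cdf_integrable c (- M) x) (cdf_integrable c x y)
                            (cdf_integrable c (- M) y)).
    rewrite (RiemannInt_P26 (cdf_integrable c (- M) y) (cdf_integrable c y M)
                            (cdf_integrable c (- M) M)).
    reflexivity. }
  change (0 <= J y (- M) M - J x (- M) M <= phi_max * (y - x)).
  rewrite !Hsplit.
  assert (Hbelow : J x (- M) x = J y (- M) x).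
  { apply RiemannInt_P18; [lra|]. intros z Hz. rewrite !cdf_integrand_le by lra. reflexivity. }
  assert (Habove : J x y M = J y y M).
  { apply RiemannInt_P18; [lra|]. intros z Hz. rewrite !cdf_integrand_gt by lra. reflexivity. }
  assert (Hx_between : J x x y = 0).
  { destruct (RiemannInt_const_bound (l := 0) (u := 0) (cdf_integrable x x y) Hxy) as [H1 H2].
    - intros z Hz. rewrite cdf_integrand_gt by lra. lra.
    - unfold J. lra. }
  assert (Hy_between : 0 * (y - x) <= J y x y <= phi_max * (y - x)).
  { apply RiemannInt_const_bound; [lra|]. intros z Hz. rewrite cdf_integrand_le by lra.
    pose proof (phi_pos z). pose proof (phi_le_max z). lra. }
  lra.
Qed.

Lemma Phi_increment (x y : R) : x <= y -> 0 <= Phi y - Phi x <= phi_max * (y - x).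
Proof.
  intros Hxy.
  assert (Happrox : forall eps, 0 < eps ->
            - eps < Phi y - Phi x < phi_max * (y - x) + eps).
  { intros eps Heps.
    destruct (Phi_spec x (eps / 2)) as [Mx HMx]; [lra|].
    destruct (Phi_spec y (eps / 2)) as [My HMy]; [lra|].
    set (M := Rmax (Rmax Mx My) (Rabs x + Rabs y)).
    assert (HMxy : Mx <= M /\ My <= M /\ Rabs x + Rabs y <= M).
    { unfold M. pose proof (Rmax_l (Rmax Mx My) (Rabs x + Rabs y)).
      pose proof (Rmax_r (Rmax Mx My) (Rabs x + Rabs y)).
      pose proof (Rmax_l Mx My). pose proof (Rmax_r Mx My). lra. }
    destruct (HMx M (proj1 HMxy)) as [prx Hx].
    destruct (HMy M (proj1 (proj2 HMxy))) as [pry Hy].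
    rewrite (RiemannInt_P5 prx (cdf_integrable x (- M) M)) in Hx.
    rewrite (RiemannInt_P5 pry (cdf_integrable y (- M) M)) in Hy.
    assert (Hwindow : - M <= x /\ y <= M).
    { pose proof (Rle_abs y). pose proof (Rle_abs (- x)). rewrite Rabs_Ropp in *.
      pose proof (Rabs_pos x). pose proof (Rabs_pos y). lra. }
    pose proof (truncated_increment x y M (proj1 Hwindow) Hxy (proj2 Hwindow)).
    apply Rabs_def2 in Hx. apply Rabs_def2 in Hy. lra. }
  split; apply Rnot_lt_le; intro Hc.
  - specialize (Happrox (Phi x - Phi y) ltac:(lra)). lra.
  - specialize (Happrox (Phi y - Phi x - phi_max * (y - x)) ltac:(lra)). lra.
Qed.

Lemma Phi_lipschitz (x y : R) : Rabs (Phi x - Phi y) <= phi_max * Rabs (x - y).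
Proof.
  destruct (Rle_lt_dec x y) as [Hxy | Hyx].
  - pose proof (Phi_increment x y Hxy).
    rewrite Rabs_minus_sym, (Rabs_minus_sym x), !Rabs_right by lra. lra.
  - pose proof (Phi_increment y x ltac:(lra)). rewrite !Rabs_right by lra. lra.
Qed.

Lemma Phi_window_perturbation (t h m : R) :
  Rabs ((Phi (t + h) - Phi (t - h)) - (Phi (t + m) - Phi (t - m)))
    <= 2 * phi_max * Rabs (h - m).
Proof.
  pose proof (Phi_lipschitz (t + h) (t + m)) as Hupper.
  pose proof (Phi_lipschitz (t - h) (t - m)) as Hlower.
  replace (t + h - (t + m)) with (h - m) in Hupper by ring.
  replace (t - h - (t - m)) with (- (h - m)) in Hlower by ring.
  rewrite Rabs_Ropp in Hlower.
  replace ((Phi (t + h) - Phi (t - h)) - (Phi (t + m) - Phi (t - m)))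
    with ((Phi (t + h) - Phi (t + m)) - (Phi (t - h) - Phi (t - m))) by ring.
  eapply Rle_trans; [apply Rabs_triang|]. rewrite Rabs_Ropp. lra.
Qed.

Theorem mainTheorem10 (n : nat) (mu t : R) :
  (0 < n)%nat -> 0 < mu ->
  forall eps, 0 < eps -> exists eta, 0 < eta /\
    forall delta, 0 < delta < eta ->
      Rabs (Rabs (F_A n mu (theta_n n t (- delta)) t - F_A n mu (theta_n n t delta) t)
            - (Phi (t + sqrt (INR n) * mu) - Phi (t - sqrt (INR n) * mu))) < eps.
Proof.
  intros Hn Hmu eps Heps.
  pose proof phi_max_pos as Hphi.
  set (m := sqrt (INR n) * mu).
  assert (Hm : 0 < m).
  { apply Rmult_lt_0_compat; [|exact Hmu]. apply sqrt_lt_R0, lt_0_INR, Hn. }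
  exists (eps / phi_max). split; [apply Rdiv_lt_0_compat; assumption|].
  intros delta [Hdelta Hsmall].
  rewrite F_A_theta_n_neg, F_A_theta_n_pos by assumption. fold m.
  destruct (half_gap_bounds m delta ltac:(lra) ltac:(lra)) as [Hh0 Hh].
  set (h := half_gap m delta) in *.
  pose proof (Phi_increment (t - h) (t + h) ltac:(lra)) as Hwindow.
  rewrite (Rabs_right (Phi (t + h) - Phi (t - h))) by lra.
  eapply Rle_lt_trans; [apply Phi_window_perturbation|].
  assert (Hgap : Rabs (h - m) <= delta / 2) by (apply Rabs_le; lra).
  assert (Hdelta_eps : phi_max * delta < eps).
  { apply (Rmult_lt_compat_l phi_max) in Hsmall; [|exact Hphi].
    replace (phi_max * (eps / phi_max)) with eps in Hsmall by (field; lra). exact Hsmall. }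
  nra.
Qed.
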